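(* Let $\mathbf A\in\mathbb R^{m\times n}$ be a nonzero matrix with rank $r$ and nonzero singular values $\sigma_1(\mathbf A)\ge\cdots\ge\sigma_r(\mathbf A)>0$, and let $\mathbf b\in\mathbb R^m$ be arbitrary (the system $\mathbf A\mathbf x=\mathbf b$ may be consistent or inconsistent). Fix any row partition, any column partition, any step size $\alpha>0$, and any initial vector $\mathbf x^0\in\mathbb R^n$, and let $\mathbf x^k$ denote the $k$th iterate of the doubly stochastic block Gauss--Seidel (DSBGS) algorithm described in the context. Let $\mathbf x_\star$ be any solution of the normal equations $\mathbf A^T\mathbf A\mathbf x=\mathbf A^T\mathbf b$. Then for every $k\ge0$, $$\big\|\mathbb E[\mathbf A\mathbf x^k-\mathbf A\mathbf x_\star]\big\|_2\le\Big(\max_{1\le i\le r}\Big|1-\frac{\alpha\sigma_i^2(\mathbf A)}{\|\mathbf A\|_F^2}\Big|\Big)^k\|\mathbf A\mathbf x^0-\mathbf A\mathbf x_\star\|_2 .$$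
   Context: Notation: $\|\cdot\|_F$ the Frobenius norm, $\|\cdot\|_2$ the Euclidean norm. For $\mathcal I\subseteq[m]=\{1,\dots,m\}$ and $\mathcal J\subseteq[n]$, $\mathbf A_{\mathcal I,\mathcal J}$ is the submatrix of $\mathbf A$ with rows indexed by $\mathcal I$ and columns indexed by $\mathcal J$; $\mathbf I_{:,\mathcal J}$ denotes the columns of the identity matrix (of the appropriate order) indexed by $\mathcal J$. DSBGS algorithm: Let $\{\mathcal I_1,\dots,\mathcal I_s\}$ be a partition of $[m]$ into nonempty pairwise disjoint sets and $\{\mathcal J_1,\dots,\mathcal J_t\}$ a partition of $[n]$ into nonempty pairwise disjoint sets; let $\mathcal P=\{\mathcal I_1,\dots,\mathcal I_s\}\times\{\mathcal J_1,\dots,\mathcal J_t\}$. Given $\alpha>0$ and $\mathbf x^0\in\mathbb R^n$, for $k=1,2,\dots$: pick $(\mathcal I,\mathcal J)\in\mathcal P$ (independently of the previous choices) with probability $\|\mathbf A_{\mathcal I,\mathcal J}\|_F^2/\|\mathbf A\|_F^2$, and set $$\mathbf x^k=\mathbf x^{k-1}-\alpha\,\frac{\mathbf I_{:,\mathcal J}(\mathbf A_{\mathcal I,\mathcal J})^{T}(\mathbf I_{:,\mathcal I})^{T}}{\|\mathbf A_{\mathcal I,\mathcal J}\|_F^2}\,(\mathbf A\mathbf x^{k-1}-\mathbf b).$$ The expectation $\mathbb E$ is over the random choices of the blocks. *)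

From mathcomp Require Import all_boot all_order all_algebra.
Set Implicit Arguments. Unset Strict Implicit. Unset Printing Implicit Defensive.
Import Order.TTheory GRing.Theory Num.Theory.
Local Open Scope ring_scope.

Section DSBGS.
Variable R : rcfType.

Definition norm2 (k : nat) (v : 'cV[R]_k) : R :=
  Num.sqrt (\sum_(i < k) v i 0 ^+ 2).

Definition frob2 (m n : nat) (A : 'M[R]_(m, n)) : R :=
  \sum_(i < m) \sum_(j < n) A i j ^+ 2.

(* sigma : 'I_r -> R are the nonzero singular values of A, in nonincreasing
   order: A has a compact SVD  A = U diag(sigma) V^T  with U, V having
   orthonormal columns and sigma_1 >= ... >= sigma_r > 0 (hence rank A = r). *)
Definition singular_values (m n r : nat) (A : 'M[R]_(m, n)) (sigma : 'I_r -> R) : Prop :=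
  (forall i, 0 < sigma i) /\
  (forall i j : 'I_r, (i <= j)%N -> sigma j <= sigma i) /\
  exists (U : 'M[R]_(m, r)) (V : 'M[R]_(n, r)),
    U^T *m U = 1%:M /\ V^T *m V = 1%:M /\
    A = U *m diag_mx (\row_i sigma i) *m V^T.

(* Row partition {I_1..I_s} given by the labelling p : [m] -> [s]
   (I_a = p^{-1}(a)); column partition by q : [n] -> [t]. *)
Variables (m n s t : nat) (A : 'M[R]_(m, n)) (b : 'cV[R]_m)
  (p : 'I_m -> 'I_s) (q : 'I_n -> 'I_t) (alpha : R).

Definition blockF2 (a : 'I_s) (c : 'I_t) : R :=
  \sum_(i < m | p i == a) \sum_(j < n | q j == c) A i j ^+ 2.

(* I_{:,J} (A_{I,J})^T (I_{:,I})^T, an n x m matrix *)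
Definition blockT (a : 'I_s) (c : 'I_t) : 'M[R]_(n, m) :=
  \matrix_(j < n, i < m) (if (p i == a) && (q j == c) then A i j else 0).

Definition block_prob (ac : 'I_s * 'I_t) : R := blockF2 ac.1 ac.2 / frob2 A.

Definition dsbgs_step (x : 'cV[R]_n) (ac : 'I_s * 'I_t) : 'cV[R]_n :=
  x - (alpha / blockF2 ac.1 ac.2) *: (blockT ac.1 ac.2 *m (A *m x - b)).

Definition dsbgs_iter (x0 : 'cV[R]_n) (cs : seq ('I_s * 'I_t)) : 'cV[R]_n :=
  foldl dsbgs_step x0 cs.

Definition Exp (k : nat) (d : nat) (f : k.-tuple ('I_s * 'I_t) -> 'cV[R]_d) : 'cV[R]_d :=
  \sum_(c : k.-tuple ('I_s * 'I_t)) (\prod_(i < k) block_prob (tnth c i)) *: f c.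

End DSBGS.

(* Averaging one DSBGS step over the block distribution gives a full
   Landweber step: the weights ||A_{I,J}||_F^2 / ||A||_F^2 cancel the step
   normalisations and the blocks of A^T add up to A^T.  Hence, by the normal
   equations, the expected residual error E[A x^k - A x_star] is
   (I - alpha/||A||_F^2 A A^T)^k (A x^0 - A x_star).  This error lies in the
   column space of U in the compact SVD A = U diag(sigma) V^T, on which the
   iteration matrix acts as diag(1 - alpha sigma_i^2 / ||A||_F^2); since U is
   an isometry the bound follows. *)
From mathcomp Require Import all_boot all_order all_algebra ring.
Set Implicit Arguments. Unset Strict Implicit. Unset Printing Implicit Defensive.
Import Order.TTheory GRing.Theory Num.Theory.
Local Open Scope ring_scope.

Lemma big_tuple_cons (V : nmodType) (T : finType) k (F : k.+1.-tuple T -> V) :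
  \sum_(c : k.+1.-tuple T) F c = \sum_(x : T) \sum_(c : k.-tuple T) F [tuple of x :: c].
Proof.
rewrite pair_big /=.
rewrite (reindex (fun c : k.+1.-tuple T => (thead c, [tuple of behead c]))) /=.
  by apply: eq_bigr => c _; rewrite -tuple_eta.
exists (fun xc : T * k.-tuple T => [tuple of xc.1 :: xc.2]) => [c _|[x c] _] /=.
  by rewrite -tuple_eta.
by rewrite theadE; congr pair; apply: val_inj.
Qed.

Lemma iter_mulmx_intertwine (R : pzSemiRingType) m r k
    (T : 'M[R]_m) (U : 'M[R]_(m, r)) (D : 'M[R]_r) (w : 'cV[R]_r) :
  T *m U = U *m D -> iter k (mulmx T) (U *m w) = U *m iter k (mulmx D) w.
Proof. by move=> TU; elim: k => //= k ->; rewrite !mulmxA TU. Qed.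

Lemma iter_mulmxE (R : pzSemiRingType) d (T : 'M[R]_d) k (v : 'cV[R]_d) :
  iter k (mulmx T) v = iter k (mulmx T) 1%:M *m v.
Proof. by elim: k => /= [|k ->]; rewrite ?mul1mx ?mulmxA. Qed.

Section EuclideanNorm.
Variable R : rcfType.

Lemma norm2_sqrE k (v : 'cV[R]_k) : norm2 v = Num.sqrt ((v^T *m v) 0 0).
Proof. by rewrite /norm2 mxE; congr Num.sqrt; apply: eq_bigr => i _; rewrite mxE expr2. Qed.

Lemma norm2_isometry a k (U : 'M[R]_(a, k)) (y : 'cV[R]_k) :
  U^T *m U = 1%:M -> norm2 (U *m y) = norm2 y.
Proof.
by move=> UU; rewrite !norm2_sqrE trmx_mul -mulmxA (mulmxA U^T) UU mul1mx.
Qed.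

Lemma norm2_diag_mul_le k (d : 'rV[R]_k) (y : 'cV[R]_k) (rho : R) :
  0 <= rho -> (forall i, `|d 0 i| <= rho) -> norm2 (diag_mx d *m y) <= rho * norm2 y.
Proof.
move=> rho_ge0 d_le; rewrite /norm2 -(ger0_norm rho_ge0) -sqrtr_sqr.
rewrite -sqrtrM ?sqr_ge0 // ler_wsqrtr // mulr_sumr; apply: ler_sum => i _.
rewrite mul_diag_mx mxE exprMn ler_wpM2r ?sqr_ge0 // -real_normK ?num_real //.
by rewrite lerXn2r ?nnegrE.
Qed.

Lemma norm2_iter_le k d (f : 'cV[R]_d -> 'cV[R]_d) (rho : R) (y : 'cV[R]_d) :
  0 <= rho -> (forall v, norm2 (f v) <= rho * norm2 v) ->
  norm2 (iter k f y) <= rho ^+ k * norm2 y.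
Proof.
move=> rho_ge0 f_le; elim: k => [|k IH] /=; first by rewrite mul1r.
by rewrite exprS -mulrA (le_trans (f_le _)) // ler_wpM2l.
Qed.

Lemma frob2_eq0 m n (A : 'M[R]_(m, n)) : frob2 A = 0 -> A = 0.
Proof.
move=> A0; apply/matrixP => i j; rewrite mxE.
have Ai0 := psumr_eq0P (fun i _ => sumr_ge0 _ (fun j _ => sqr_ge0 (A i j))) A0 (i := i) isT.
have := psumr_eq0P (fun j _ => sqr_ge0 (A i j)) Ai0 (i := j) isT.
by move/eqP; rewrite sqrf_eq0 => /eqP.
Qed.

End EuclideanNorm.

Section DSBGS.
Variable R : rcfType.
Variables (m n s t : nat) (A : 'M[R]_(m, n)) (b : 'cV[R]_m)
  (p : 'I_m -> 'I_s) (q : 'I_n -> 'I_t) (alpha : R).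

Lemma blockT_eq0 a c : blockF2 A p q a c = 0 -> blockT A p q a c = 0.
Proof.
move=> F0; apply/matrixP => j i; rewrite !mxE.
case: ifP => // /andP[/eqP pi_a /eqP qj_c].
have Ai0 : \sum_(l < n | q l == c) A i l ^+ 2 = 0.
  apply: (psumr_eq0P _ F0); last by rewrite pi_a.
  by move=> k _; apply: sumr_ge0 => l _; apply: sqr_ge0.
have := psumr_eq0P (fun l _ => sqr_ge0 (A i l)) Ai0 (i := j).
by rewrite qj_c eqxx => /(_ isT) /eqP; rewrite sqrf_eq0 => /eqP.
Qed.

Lemma sum_blockT : \sum_(ac : 'I_s * 'I_t) blockT A p q ac.1 ac.2 = A^T.
Proof.
apply/matrixP => j i; rewrite summxE !mxE.
rewrite -(pair_big xpredT xpredT (fun a c => blockT A p q a c j i)) /=.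
rewrite (bigD1 (p i)) //= [X in _ + X]big1 ?addr0; last first.
  by move=> a a_ne; apply: big1 => c _; rewrite mxE eq_sym (negbTE a_ne).
rewrite (bigD1 (q j)) //= [X in _ + X]big1 ?addr0; first by rewrite mxE !eqxx.
by move=> c c_ne; rewrite mxE eqxx eq_sym (negbTE c_ne).
Qed.

Lemma sum_blockF2 : \sum_(ac : 'I_s * 'I_t) blockF2 A p q ac.1 ac.2 = frob2 A.
Proof.
rewrite -(pair_big xpredT xpredT (fun a c => blockF2 A p q a c)) /= /frob2 /blockF2.
rewrite [RHS](partition_big p xpredT) //=; apply: eq_bigr => a _.
rewrite exchange_big /=; apply: eq_bigr => i _.
by rewrite [RHS](partition_big q xpredT).
Qed.

Lemma sum_block_prob : frob2 A != 0 -> \sum_(ac : 'I_s * 'I_t) block_prob A p q ac = 1.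
Proof. by move=> F0; rewrite /block_prob -mulr_suml sum_blockF2 divff. Qed.

Lemma Exp0 d (f : 0.-tuple ('I_s * 'I_t) -> 'cV[R]_d) : Exp A p q f = f [tuple].
Proof.
rewrite /Exp (eq_bigl (pred1 [tuple])) ?big_pred1_eq ?big_ord0 ?scale1r //.
by move=> c; apply/esym/eqP/val_inj; case: c => -[].
Qed.

Lemma Exp_cons k d (f : k.+1.-tuple ('I_s * 'I_t) -> 'cV[R]_d) :
  Exp A p q f =
  \sum_(ac : 'I_s * 'I_t) block_prob A p q ac *: Exp A p q (fun c => f [tuple of ac :: c]).
Proof.
rewrite /Exp big_tuple_cons; apply: eq_bigr => ac _; rewrite scaler_sumr.
apply: eq_bigr => c _; rewrite big_ord_recl tnth0 scalerA.
by congr (_ * _ *: _); apply: eq_bigr => i _; rewrite tnthS.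
Qed.

Lemma expected_dsbgs_step (x : 'cV[R]_n) : frob2 A != 0 ->
  \sum_(ac : 'I_s * 'I_t) block_prob A p q ac *: dsbgs_step A b p q alpha x ac
  = x - (alpha / frob2 A) *: (A^T *m (A *m x - b)).
Proof.
move=> F0.
have weighted_step ac : block_prob A p q ac *: dsbgs_step A b p q alpha x ac
    = block_prob A p q ac *: x - (alpha / frob2 A) *: (blockT A p q ac.1 ac.2 *m (A *m x - b)).
  rewrite /dsbgs_step scalerBr scalerA /block_prob; congr (_ - _).
  (* When ||A_{I,J}||_F = 0 the weight does not cancel (x / 0 = 0), but then
     the block of A^T vanishes. *)
  have [F_ac0|F_ac_ne0] := eqVneq (blockF2 A p q ac.1 ac.2) 0.
    by rewrite blockT_eq0 // mul0mx !scaler0.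
  by congr (_ *: _); field; apply/andP.
rewrite (eq_bigr _ (fun ac _ => weighted_step ac)) sumrB -scaler_suml.
by rewrite sum_block_prob // scale1r -scaler_sumr -mulmx_suml sum_blockT.
Qed.

Definition residual_iteration_mx : 'M[R]_m := 1%:M - (alpha / frob2 A) *: (A *m A^T).

Lemma expected_residual_step (x xs : 'cV[R]_n) :
  frob2 A != 0 -> A^T *m A *m xs = A^T *m b ->
  \sum_(ac : 'I_s * 'I_t) block_prob A p q ac *: (A *m dsbgs_step A b p q alpha x ac - A *m xs)
  = residual_iteration_mx *m (A *m x - A *m xs).
Proof.
move=> F0 normal_eq.
under eq_bigr do rewrite scalerBr scalemxAr.
rewrite sumrB -scaler_suml sum_block_prob // scale1r -mulmx_sumr.
have gradient : A^T *m (A *m x - b) = A^T *m (A *m x - A *m xs).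
  by rewrite !mulmxBr -normal_eq !mulmxA.
rewrite expected_dsbgs_step // gradient mulmxBr mulmxBl mul1mx -scalemxAl.
by rewrite -scalemxAr mulmxA addrAC.
Qed.

Lemma Exp_dsbgs_residual (xs : 'cV[R]_n) :
  frob2 A != 0 -> A^T *m A *m xs = A^T *m b -> forall k (x0 : 'cV[R]_n),
  Exp A p q (k := k) (fun c => A *m dsbgs_iter A b p q alpha x0 c - A *m xs)
  = iter k (mulmx residual_iteration_mx) (A *m x0 - A *m xs).
Proof.
move=> F0 normal_eq; elim=> [|k IH] x0; first by rewrite Exp0.
rewrite Exp_cons iterSr -expected_residual_step // [RHS]iter_mulmxE mulmx_sumr.
by apply: eq_bigr => ac _; rewrite IH iter_mulmxE scalemxAr.
Qed.

Lemma residual_iteration_mx_svd r (U : 'M[R]_(m, r)) (V : 'M[R]_(n, r)) (sigma : 'I_r -> R) :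
  U^T *m U = 1%:M -> V^T *m V = 1%:M -> A = U *m diag_mx (\row_i sigma i) *m V^T ->
  residual_iteration_mx *m U
  = U *m diag_mx (\row_i (1 - alpha * sigma i ^+ 2 / frob2 A)).
Proof.
move=> UU VV A_svd.
have AAU : A *m A^T *m U = U *m diag_mx (\row_i (sigma i ^+ 2)).
  rewrite A_svd !trmx_mul trmxK tr_diag_mx !mulmxA -!(mulmxA _ V^T) VV mulmx1.
  rewrite -!(mulmxA _ U^T) UU mulmx1 -mulmxA mulmx_diag.
  by congr (_ *m diag_mx _); apply/rowP => i; rewrite !mxE expr2.
rewrite mulmxBl mul1mx -scalemxAl AAU scalemxAr -{1}(mulmx1 U) -mulmxBr.
congr (_ *m _); apply/matrixP => i j; rewrite !mxE.
by have [->|] := eqVneq i j; rewrite ?mulr1n ?mulr0n ?mulr0 ?subr0 // mulrAC.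
Qed.

End DSBGS.

Theorem theorem2 (R : rcfType) (m n r s t : nat) (A : 'M[R]_(m, n)) (b : 'cV[R]_m)
  (sigma : 'I_r -> R)
  (p : 'I_m -> 'I_s) (q : 'I_n -> 'I_t) (alpha : R) (x0 xs : 'cV[R]_n) :
  A != 0 ->
  singular_values A sigma ->
  (forall a : 'I_s, exists i, p i = a) ->
  (forall c : 'I_t, exists j, q j = c) ->
  0 < alpha ->
  A^T *m A *m xs = A^T *m b ->
  forall k : nat,
    norm2 (Exp A p q (k := k)
             (fun c : k.-tuple _ => A *m dsbgs_iter A b p q alpha x0 c - A *m xs))
    <= (\big[Num.max/0]_(i < r) `|1 - alpha * sigma i ^+ 2 / frob2 A|) ^+ k
       * norm2 (A *m x0 - A *m xs).
Proof.
move=> A_ne0 [_ [_ [U [V [UU [VV A_svd]]]]]] _ _ _ normal_eq k.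
have F0 : frob2 A != 0 by apply: contraNneq A_ne0 => /frob2_eq0 ->.
set rho := \big[Num.max/0]_(i < r) _.
have rho_ge0 : 0 <= rho by elim/big_ind: rho => // x y; rewrite le_max => ->.
have residual_in_range :
    A *m x0 - A *m xs = U *m (diag_mx (\row_i sigma i) *m V^T *m (x0 - xs)).
  by rewrite -mulmxBr A_svd !mulmxA.
rewrite Exp_dsbgs_residual // residual_in_range.
rewrite (iter_mulmx_intertwine _ _ (residual_iteration_mx_svd alpha UU VV A_svd)).
rewrite !(norm2_isometry _ UU); apply: norm2_iter_le => // v.
apply: norm2_diag_mul_le => // i; rewrite mxE.
exact: (le_bigmax 0 (fun i => `|1 - alpha * sigma i ^+ 2 / frob2 A|)).
Qed.
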